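(* Let $c,d,d_1,d_2\in\mathbb{Z}$ and $T=T(c,d,d_1,d_2)$, i.e. $T_{r,k}=c+kd_1+rd_2+rkd$ for all $r,k\ge 0$. Then $$T_{r,k}=T_{r-1,k}+T_{r,k-1}-T_{r-2,k-1}-T_{r-2,k-2}+T_{r-3,k-2}\quad\text{for } r\ge 3,\ k\ge 2;$$ $$T_{r,k}=T_{r,k-1}+T_{r-1,k-1}-T_{r-2,k-2}-T_{r-2,k-3}+T_{r-3,k-3}\quad\text{for } r,k\ge 3;$$ $$T_{r,k}=T_{r-1,k}+T_{r-1,k-1}-T_{r-2,k-2}-T_{r-3,k-2}+T_{r-3,k-3}\quad\text{for } r,k\ge 3.$$
   Context: A number triangle is an array of integers $T_{r,k}$ indexed by integers $r,k\ge 0$. For $c,d,d_1,d_2\in\mathbb{Z}$, the Generalized Rascal Triangle $T(c,d,d_1,d_2)$ is the number triangle with $T_{r,k}=c+kd_1+rd_2+rkd$. *)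

From Stdlib Require Import ZArith Lia.
Open Scope Z_scope.

Definition rascalT (c d d1 d2 : Z) (r k : nat) : Z :=
  c + Z.of_nat k * d1 + Z.of_nat r * d2 + Z.of_nat r * Z.of_nat k * d.

From Stdlib Require Import ZArith Lia.
Open Scope Z_scope.

(* [T_{r,k}] is the restriction to [N^2] of a polynomial of degree at most one
   in each variable, and the three recurrences are polynomial identities for
   it on all of [Z^2].  The bounds on [r] and [k] only ensure that the
   truncated subtractions [r - i], [k - j] on [nat] agree with those on [Z]. *)

Section RascalPolynomial.

Variables c d d1 d2 : Z.

Definition rascalZ (r k : Z) : Z := c + k * d1 + r * d2 + r * k * d.

Lemma rascalT_rascalZ (r k : nat) :
  rascalT c d d1 d2 r k = rascalZ (Z.of_nat r) (Z.of_nat k).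
Proof. reflexivity. Qed.

Lemma rascalZ_rec_r3k2 (r k : Z) :
  rascalZ r k = rascalZ (r - 1) k + rascalZ r (k - 1) - rascalZ (r - 2) (k - 1)
                - rascalZ (r - 2) (k - 2) + rascalZ (r - 3) (k - 2).
Proof. unfold rascalZ; ring. Qed.

Lemma rascalZ_rec_r3k3_left (r k : Z) :
  rascalZ r k = rascalZ r (k - 1) + rascalZ (r - 1) (k - 1) - rascalZ (r - 2) (k - 2)
                - rascalZ (r - 2) (k - 3) + rascalZ (r - 3) (k - 3).
Proof. unfold rascalZ; ring. Qed.

Lemma rascalZ_rec_r3k3_right (r k : Z) :
  rascalZ r k = rascalZ (r - 1) k + rascalZ (r - 1) (k - 1) - rascalZ (r - 2) (k - 2)
                - rascalZ (r - 3) (k - 2) + rascalZ (r - 3) (k - 3).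
Proof. unfold rascalZ; ring. Qed.

End RascalPolynomial.

Theorem mainTheorem11 (c d d1 d2 : Z) :
  let T := rascalT c d d1 d2 in
  (forall r k : nat, (3 <= r)%nat -> (2 <= k)%nat ->
     T r k = T (r-1)%nat k + T r (k-1)%nat - T (r-2)%nat (k-1)%nat
             - T (r-2)%nat (k-2)%nat + T (r-3)%nat (k-2)%nat) /\
  (forall r k : nat, (3 <= r)%nat -> (3 <= k)%nat ->
     T r k = T r (k-1)%nat + T (r-1)%nat (k-1)%nat - T (r-2)%nat (k-2)%nat
             - T (r-2)%nat (k-3)%nat + T (r-3)%nat (k-3)%nat) /\
  (forall r k : nat, (3 <= r)%nat -> (3 <= k)%nat ->
     T r k = T (r-1)%nat k + T (r-1)%nat (k-1)%nat - T (r-2)%nat (k-2)%nat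
             - T (r-3)%nat (k-2)%nat + T (r-3)%nat (k-3)%nat).
Proof.
  intro T; unfold T.
  split; [|split]; intros r k Hr Hk;
    rewrite !rascalT_rascalZ, !Nat2Z.inj_sub by lia.
  - apply rascalZ_rec_r3k2.
  - apply rascalZ_rec_r3k3_left.
  - apply rascalZ_rec_r3k3_right.
Qed.
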